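(* Let $S \in \mathbb{Z}^{m\times m}$ be nonsingular, $F \in \mathbb{Z}^{n\times m}$, and let $H\in\mathbb{Z}^{n\times n}$ be the Hermite basis of $\mathcal{R}(S,F)$. Let $n = n_1+n_2$ with $n_1,n_2\ge 0$, write $H = \begin{bmatrix} \bar H_1 & H_{12} \\ 0 & \bar H_2\end{bmatrix}$ with $\bar H_1 \in \mathbb{Z}^{n_1\times n_1}$, and set $H_1 = \mathrm{diag}(\bar H_1, I_{n_2})$, $H_2 = \begin{bmatrix} I_{n_1} & H_{12}\\ 0 & \bar H_2\end{bmatrix}$. Let $A$ be the last $n_2$ rows of $F$ and let $T\in\mathbb{Z}^{m\times m}$ be the Hermite basis of $\begin{bmatrix} S\\ A\end{bmatrix}$. Then: (1) $H_2$ is the Hermite basis of $\mathcal{R}(S, H_1F)$; (2) the Hermite basis of $\begin{bmatrix} S \\ H_1F\end{bmatrix}$ is equal to $T$.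
   Context: For an integer matrix $A$, $\mathcal{L}(A)$ denotes the lattice of all $\mathbb{Z}$-linear combinations of the rows of $A$. For $M \in \mathbb{Z}^{\ell \times m}$ of full column rank and $F \in \mathbb{Z}^{n \times m}$, the integer relations lattice is $\mathcal{R}(M,F) := \{p \in \mathbb{Z}^{1\times n} : pF \in \mathcal{L}(M)\}$; its Hermite basis is the unique nonsingular $H\in\mathbb{Z}^{n\times n}$ in Hermite form with $\mathcal{L}(H)=\mathcal{R}(M,F)$. A nonsingular square integer matrix is in Hermite form if it is upper triangular with positive diagonal entries $h_j$ and each entry above the diagonal in column $j$ lies in $[0,h_j)$. The Hermite basis of a full column rank integer matrix $B$ with $m$ columns is the unique $m\times m$ matrix in Hermite form whose row lattice equals $\mathcal{L}(B)$. *)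

From mathcomp Require Import all_boot all_order all_algebra.
Set Implicit Arguments. Unset Strict Implicit. Unset Printing Implicit Defensive.
Import Order.TTheory GRing.Theory Num.Theory.
Local Open Scope ring_scope.

Definition lattice (r c : nat) (A : 'M[int]_(r, c)) (v : 'rV[int]_c) : Prop :=
  exists x : 'rV[int]_r, v = x *m A.

Definition relations (l m n : nat) (M : 'M[int]_(l, m)) (F : 'M[int]_(n, m))
  (p : 'rV[int]_n) : Prop := lattice M (p *m F).

Definition hermite_form (n : nat) (H : 'M[int]_n) : bool :=
  [forall i : 'I_n, forall j : 'I_n,
     (((j < i)%N ==> (H i j == 0)) && ((i < j)%N ==> ((0 <= H i j) && (H i j < H j j)))) ]
  && [forall j : 'I_n, 0 < H j j].

Definition hermite_basis_of (n : nat) (H : 'M[int]_n) (L : 'rV[int]_n -> Prop) : Prop :=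
  hermite_form H /\ (forall v, lattice H v <-> L v).

Definition hermite_basis_mx (r c : nat) (H : 'M[int]_c) (B : 'M[int]_(r, c)) : Prop :=
  hermite_basis_of H (lattice B).

From mathcomp Require Import all_boot all_order all_algebra.
Set Implicit Arguments. Unset Strict Implicit. Unset Printing Implicit Defensive.
Import GRing.Theory Num.Theory.
Local Open Scope ring_scope.

(** The lower-left block of [H] vanishes, so [H = H2 H1] with
    [\det H1 = \det Hbar1 > 0].  Hence [v] is a relation of [(S, H1 F)] iff
    [v H1] lies in [L(H) = L(H2 H1)] iff [v] lies in [L(H2)], cancelling the
    nonsingular [H1]; and [H2] inherits the Hermite form of [H].  For (2), the
    rows of [H F] lie in [L(S)], i.e. [H F = X S], so the top block [Hbar1 F1]
    of [H1 F] equals [X1 S - H12 A], [X1] the top block of [X]; these rows are redundant modulo [S] and [A], so [[S; H1 F]]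
    and [[S; A]] span the same lattice. *)

Lemma mulmxI_det (R : idomainType) (p q : nat) (M : 'M[R]_q) (u w : 'M[R]_(p, q)) :
  \det M != 0 -> u *m M = w *m M -> u = w.
Proof.
move=> detM0 /(congr1 (mulmx^~ (\adj M))).
rewrite -!mulmxA mul_mx_adj !mul_mx_scalar => /eqP.
by rewrite -subr_eq0 -scalerBr scalemx_eq0 (negbTE detM0) subr_eq0 => /eqP.
Qed.

Lemma lattice_mulmx (r s c : nat) (X : 'M[int]_(r, s)) (B : 'M[int]_(s, c)) v :
  lattice (X *m B) v -> lattice B v.
Proof. by case=> x ->; exists (x *m X); rewrite mulmxA. Qed.

Lemma lattice_eq (r s c : nat) (A : 'M[int]_(r, c)) (B : 'M[int]_(s, c))
    (X : 'M[int]_(r, s)) (Y : 'M[int]_(s, r)) :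
  A = X *m B -> B = Y *m A -> forall v, lattice A v <-> lattice B v.
Proof. by move=> eA eB v; split; [rewrite eA | rewrite eB]; apply: lattice_mulmx. Qed.

Lemma lattice_rows_mulmx (r l c : nat) (A : 'M[int]_(r, c)) (M : 'M[int]_(l, c)) :
  (forall i, lattice M (row i A)) -> exists X : 'M[int]_(r, l), A = X *m M.
Proof.
case/fin_all_exists => x ex; exists (\matrix_i x i).
by apply/row_matrixP => i; rewrite row_mul rowK -ex.
Qed.

Lemma lattice_mulmxr_det (r n : nat) (A : 'M[int]_(r, n)) (B : 'M[int]_n) v :
  \det B != 0 -> lattice (A *m B) (v *m B) <-> lattice A v.
Proof.
move=> detB0; split; case=> x ev; exists x; last by rewrite ev mulmxA.
by apply: (mulmxI_det detB0); rewrite -mulmxA -ev.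
Qed.

Lemma lattice_col_mx_redundant (l r k c : nat) (S : 'M[int]_(l, c))
    (B : 'M[int]_(r, c)) (D : 'M[int]_(k, c)) (X : 'M[int]_(r, l)) (Y : 'M[int]_(r, k)) :
  B = X *m S + Y *m D ->
  forall v, lattice (col_mx S (col_mx B D)) v <-> lattice (col_mx S D) v.
Proof.
move=> eB; apply: (@lattice_eq _ _ _ _ _ (block_mx 1%:M 0 (col_mx X 0) (col_mx Y 1%:M))
                                          (block_mx 1%:M 0 0 (row_mx 0 1%:M))).
  by rewrite mul_block_col !mul1mx !mul0mx addr0 !mul_col_mx mul0mx mul1mx add_col_mx add0r -eB.
by rewrite mul_block_col !mul1mx !mul0mx addr0 add0r mul_row_col mul0mx mul1mx add0r.
Qed.

Lemma relations_mulmx (l m n k : nat) (S : 'M[int]_(l, m)) (G : 'M[int]_(n, k))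
    (F : 'M[int]_(k, m)) v :
  relations S (G *m F) v = relations S F (v *m G).
Proof. by rewrite /relations mulmxA. Qed.

Section HermiteForm.

Variable n : nat.
Implicit Type H : 'M[int]_n.

Lemma hermite_formP H :
  reflect [/\ forall i j : 'I_n, (j < i)%N -> H i j = 0,
              forall i j : 'I_n, (i < j)%N -> 0 <= H i j < H j j
            & forall j, 0 < H j j]
          (hermite_form H).
Proof.
apply: (iffP andP) => [[/forallP lowH /forallP diagH] | [lowH upH diagH]].
  split=> // i j; move/forallP: (lowH i) => /(_ j) /andP[/implyP low /implyP up].
    by move/low/eqP.
  exact: up.
split; apply/forallP=> // i; apply/forallP=> j.
by apply/andP; split; apply/implyP; [move/lowH -> | move/upH].
Qed.

Lemma det_hermite_form_gt0 H : hermite_form H -> 0 < \det H.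
Proof.
case/hermite_formP=> lowH _ diagH; rewrite -det_tr det_trig.
  by apply: prodr_gt0 => i _; rewrite mxE.
by apply/is_trig_mxP => i j ij; rewrite mxE lowH.
Qed.

End HermiteForm.

Section HermiteBlocks.

Variables n1 n2 : nat.
Implicit Type H : 'M[int]_(n1 + n2).

Lemma hermite_form_ulsubmx H : hermite_form H -> hermite_form (ulsubmx H).
Proof.
case/hermite_formP=> lowH upH diagH; apply/hermite_formP.
by split=> [i j ji|i j ij|j]; rewrite !mxE; [apply: lowH | apply: upH | apply: diagH].
Qed.

Lemma hermite_form_dlsubmx0 H : hermite_form H -> dlsubmx H = 0.
Proof.
case/hermite_formP=> lowH _ _; apply/matrixP => i j; rewrite !mxE lowH //=.
exact: leq_trans (ltn_ord j) (leq_addr _ _).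
Qed.

Lemma hermite_form_unit_ulblock H :
  hermite_form H -> hermite_form (block_mx 1%:M (ursubmx H) 0 (drsubmx H)).
Proof.
case/hermite_formP=> lowH upH diagH; apply/hermite_formP.
have rshift_lshiftF (i : 'I_n1) (j : 'I_n2) : (n1 + j < i)%N = false.
  by rewrite ltnNge (leq_trans (ltnW (ltn_ord i)) (leq_addr _ _)).
split.
- move=> i j; rewrite -(splitK i) -(splitK j).
  case: (split i) => i'; case: (split j) => j' /=;
    rewrite ?block_mxEul ?block_mxEur ?block_mxEdl ?block_mxEdr ?mxE ?rshift_lshiftF //.
  + by case: eqP => // ->; rewrite ltnn.
  + by move=> ji; apply: lowH.
- move=> i j; rewrite -(splitK i) -(splitK j).
  case: (split i) => i'; case: (split j) => j' /=;
    rewrite ?block_mxEul ?block_mxEur ?block_mxEdl ?block_mxEdr ?mxE ?rshift_lshiftF //.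
  + by rewrite eqxx; case: eqP => [->|_]; rewrite ?ltnn ?ltr01.
  + by move=> ij; apply: (upH (lshift n2 i') (rshift n1 j')).
  + by move=> ij; apply: (upH (rshift n1 i') (rshift n1 j')).
- move=> j; rewrite -(splitK j); case: (split j) => j' /=.
    by rewrite block_mxEul mxE eqxx.
  by rewrite block_mxEdr !mxE; apply: (diagH (rshift n1 j')).
Qed.

End HermiteBlocks.

Lemma block_upper_mx_factor (R : pzRingType) (n1 n2 : nat) (H : 'M[R]_(n1 + n2)) :
  dlsubmx H = 0 ->
  H = block_mx 1%:M (ursubmx H) 0 (drsubmx H) *m block_mx (ulsubmx H) 0 0 1%:M.
Proof.
move=> dlH0; rewrite mulmx_block !mul1mx !mul0mx !mulmx0 !mulmx1 !addr0 !add0r.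
by rewrite -dlH0 submxK.
Qed.

Theorem mainTheorem12 (m n1 n2 : nat)
  (S : 'M[int]_m) (F : 'M[int]_(n1 + n2, m))
  (H : 'M[int]_(n1 + n2)) (T : 'M[int]_m) :
  \det S != 0 ->
  hermite_basis_of H (relations S F) ->
  hermite_basis_mx T (col_mx S (dsubmx F)) ->
  let H1 : 'M[int]_(n1 + n2) := block_mx (ulsubmx H) 0 0 1%:M in
  let H2 : 'M[int]_(n1 + n2) := block_mx 1%:M (ursubmx H) 0 (drsubmx H) in
  hermite_basis_of H2 (relations S (H1 *m F)) /\
  hermite_basis_mx T (col_mx S (H1 *m F)).
Proof.
move=> _ [hermH latH] [hermT latT] H1 H2.
have H_factor : H = H2 *m H1 := block_upper_mx_factor (hermite_form_dlsubmx0 hermH).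
have detH1 : \det H1 != 0.
  by rewrite det_ublock det1 mulr1 lt0r_neq0 ?det_hermite_form_gt0 ?hermite_form_ulsubmx.
split.
  split=> [|v]; first exact: hermite_form_unit_ulblock.
  rewrite relations_mulmx; apply: iff_trans (latH (v *m H1)).
  by rewrite {1}H_factor; apply: iff_sym; apply: lattice_mulmxr_det.
have [X HF] : exists X, H *m F = X *m S.
  apply: lattice_rows_mulmx => i; rewrite row_mul; apply/latH.
  by exists (delta_mx 0 i); rewrite -rowE.
have H1F : H1 *m F = col_mx (ulsubmx H *m usubmx F) (dsubmx F).
  by rewrite -[in LHS](vsubmxK F) mul_block_col !mul0mx mul1mx addr0 add0r.
have top_H1F : ulsubmx H *m usubmx F = usubmx X *m S + (- ursubmx H) *m dsubmx F.
  have := congr1 usubmx HF.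
  rewrite -!mul_usub_mx -[usubmx H]hsubmxK -[in LHS](vsubmxK F) mul_row_col => <-.
  by rewrite mulNmx addrK.
split=> // v; apply: iff_trans (latT v) _; rewrite H1F.
exact: iff_sym (lattice_col_mx_redundant top_H1F v).
Qed.
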